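(* Let $\mathrm{Cir}_9$ be the graph with vertex set $\{1,\dots,9\}$ whose maximal stable sets are exactly $\{1,2,3\},\{4,5,6\},\{7,8,9\},\{1,4,7\},\{3,6,9\}$ (so two distinct vertices are non-adjacent iff they lie together in one of these sets). Then $\mathrm{Cir}_9$ is triangle but not $\cup$-equistable.
   Context: A graph $G$ is triangle if for every maximal stable set $S$ of $G$ and every edge $uv$ of $G$ with $u,v\notin S$, there is $s\in S$ adjacent to both $u$ and $v$. A graph $G=(V,E)$ is equistable if there is $\varphi:V\to\mathbb R_+$ such that for all $S\subseteq V$, $S$ is a maximal stable set iff $\sum_{v\in S}\varphi(v)=1$. A graph is $\cup$-equistable if it or its complement is equistable. *)

From HB Require Import structures.
From mathcomp Require Import all_boot all_order all_algebra.
From mathcomp Require Import Rstruct.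
From Stdlib Require Import Reals.
Set Implicit Arguments. Unset Strict Implicit. Unset Printing Implicit Defensive.
Import Order.TTheory GRing.Theory Num.Theory.

Definition simple_graph (T : finType) (e : rel T) : Prop :=
  irreflexive e /\ symmetric e.

Definition stable (T : finType) (e : rel T) (S : {set T}) : bool :=
  [forall x in S, forall y in S, ~~ e x y].

Definition maximal_stable (T : finType) (e : rel T) (S : {set T}) : bool :=
  maxset (stable e) S.

Definition triangle_graph (T : finType) (e : rel T) : Prop :=
  forall S : {set T}, maximal_stable e S ->
  forall u v : T, e u v -> u \notin S -> v \notin S ->
  exists s, [/\ s \in S, e s u & e s v].

Local Open Scope ring_scope.
Definition equistable (T : finType) (e : rel T) : Prop :=
  exists phi : T -> R,
    (forall v, 0 <= phi v) /\
    (forall S : {set T}, maximal_stable e S <-> \sum_(v in S) phi v = 1).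

Local Close Scope ring_scope.

Definition complement_graph (T : finType) (e : rel T) : rel T :=
  fun x y => (x != y) && ~~ e x y.

Definition cup_equistable (T : finType) (e : rel T) : Prop :=
  equistable e \/ equistable (complement_graph e).

(* Cir_9: vertices 1..9 encoded as 0..8 in 'I_9 (vertex k+1 <-> ordinal k).
   Two distinct vertices are non-adjacent iff they lie together in one of
   {1,2,3},{4,5,6},{7,8,9},{1,4,7},{3,6,9}. *)
Definition cir9_blocks : seq (seq nat) :=
  [:: [:: 0; 1; 2]; [:: 3; 4; 5]; [:: 6; 7; 8]; [:: 0; 3; 6]; [:: 2; 5; 8]].

Definition cir9 : rel 'I_9 :=
  fun x y => (x != y) &&
    ~~ has (fun b : seq nat => (nat_of_ord x \in b) && (nat_of_ord y \in b)) cir9_blocks.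

(** Every stable set of Cir_9 lies in one of its five blocks, so the maximal
    stable sets are exactly the blocks and the triangle property is a finite
    check.  In an equistable graph the maximal stable sets are closed under
    affine integer combinations: if the indicator of S is a combination with
    coefficients summing to 1, every equistable weighting gives S weight 1,
    so S must be maximal stable.  In Cir_9, {2,5,8} = {1,2,3} + {4,5,6} +
    {7,8,9} - {1,4,7} - {3,6,9} contains an edge; in the complement,
    {1,4,8} = {1,5,8} + {2,4,8} - {2,5,8} is not a clique, as 1 and 4 are
    non-adjacent (vertices numbered from 1 as in the paper). *)
From HB Require Import structures.
From mathcomp Require Import all_boot all_order all_algebra.
From mathcomp Require Import Rstruct.
Set Implicit Arguments. Unset Strict Implicit. Unset Printing Implicit Defensive.
Import GRing.Theory.

Section StableSets.
Local Open Scope ring_scope.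
Variables (T : finType) (e : rel T).

Lemma dominating_stable_maximal (S : {set T}) :
  stable e S -> (forall x, x \notin S -> exists2 a, a \in S & e a x) ->
  maximal_stable e S.
Proof.
move=> stS domS; apply/maxsetP; split=> // B stB sSB.
apply/eqP; rewrite eqEsubset sSB andbT; apply/subsetP => x xB.
apply/negPn/negP => /domS [a aS eax].
have aB : a \in B by exact: (subsetP sSB).
by move/forallP: stB => /(_ a); rewrite aB => /forallP /(_ x); rewrite xB eax.
Qed.

Lemma sum_set_weights (V : nmodType) (phi : T -> V) (s : seq {set T}) :
  \sum_(A <- s) \sum_(v in A) phi v
    = \sum_v phi v *+ count (fun A : {set T} => v \in A) s.
Proof.
elim: s => [|A s IH]; first by rewrite big_nil big1 // => v _; rewrite mulr0n.
rewrite big_cons IH /= (eq_bigr _ (fun v _ => mulrnDr _ _ _)) big_split /=.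
by congr (_ + _); rewrite big_mkcond; apply: eq_bigr => v _; case: (v \in A).
Qed.

Lemma equistable_count_closed (pos neg : seq {set T}) (S : {set T}) :
  equistable e ->
  all (maximal_stable e) pos -> all (maximal_stable e) neg ->
  size pos = (size neg).+1 ->
  (forall v, count (fun A : {set T} => v \in A) pos
             = addn (v \in S) (count (fun A : {set T} => v \in A) neg)) ->
  maximal_stable e S.
Proof.
move=> [phi [_ equiphi]] maxpos maxneg sizepos countS; apply/equiphi.
have weight_size s : all (maximal_stable e) s ->
    \sum_(A <- s) \sum_(v in A) phi v = (size s)%:R.
  elim: s => [|A s IH]; first by rewrite big_nil.
  by move=> /= /andP [/equiphi mA /IH ms]; rewrite big_cons mA ms -add1n natrD.
have : \sum_(A <- pos) \sum_(v in A) phi v = \sum_(A <- S :: neg) \sum_(v in A) phi v.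
  by rewrite !sum_set_weights; apply: eq_bigr => v _; rewrite countS.
by rewrite big_cons !weight_size // sizepos -natr1 [RHS]addrC => /addrI.
Qed.

End StableSets.

Definition cir9_set (b : seq nat) : {set 'I_9} := [set x : 'I_9 | val x \in b].

Lemma all_iota9P (P : pred nat) : all P (iota 0 9) -> forall x : 'I_9, P x.
Proof. by move=> /allP allP x; apply: allP; rewrite mem_iota ltn_ord. Qed.

Lemma has_iota9P (P : pred nat) : has P (iota 0 9) -> exists x : 'I_9, P x.
Proof.
move=> /hasP [x]; rewrite mem_iota add0n => /andP [_ x9] Px.
by exists (Ordinal x9).
Qed.

Lemma count_cir9_set (bs : seq (seq nat)) (v : 'I_9) :
  count (fun A : {set 'I_9} => v \in A) (map cir9_set bs)
  = count (fun b => val v \in b) bs.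
Proof. by rewrite count_map; apply: eq_count => b; rewrite /= inE. Qed.

(* Finite quantifiers over 'I_9 and membership in a {set 'I_9} do not
   compute, so properties of the sets cir9_set b are decided over [iota 0 9]
   through an adjacency relation on the underlying naturals. *)
Section NatGraph.
Variables (r : rel nat) (e : rel 'I_9).
Hypothesis eE : forall x y : 'I_9, e x y = r x y.

Definition block_stable (b : seq nat) : bool :=
  all (fun x => all (fun y => (x \in b) ==> (y \in b) ==> ~~ r x y)
                    (iota 0 9)) (iota 0 9).

Definition block_dominating (b : seq nat) : bool :=
  all (fun x => (x \notin b) ==> has (fun a => (a \in b) && r a x) (iota 0 9))
      (iota 0 9).

Definition block_maximal (b : seq nat) : bool :=
  block_stable b && block_dominating b.

Definition count_identity (bpos bneg : seq (seq nat)) (bS : seq nat) : bool :=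
  all (fun n => count (fun b => n \in b) bpos
                == (n \in bS) + count (fun b => n \in b) bneg) (iota 0 9).

Lemma stable_cir9_setP (b : seq nat) : stable e (cir9_set b) = block_stable b.
Proof.
apply/idP/idP => [stb | bst].
- apply/allP => x; rewrite mem_iota => /andP [_ x9].
  apply/allP => y; rewrite mem_iota => /andP [_ y9].
  apply/implyP => xb; apply/implyP => yb.
  move/forallP: stb => /(_ (Ordinal x9)); rewrite inE xb.
  by move=> /forallP /(_ (Ordinal y9)); rewrite inE yb eE.
- apply/forallP => x; apply/implyP; rewrite inE => xb.
  apply/forallP => y; apply/implyP; rewrite inE => yb.
  by rewrite eE; move: (all_iota9P (all_iota9P bst x) y); rewrite xb yb.
Qed.

Lemma maximal_stable_cir9_set (b : seq nat) :
  block_maximal b -> maximal_stable e (cir9_set b).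
Proof.
move=> /andP [bst bdom]; apply: dominating_stable_maximal.
  by rewrite stable_cir9_setP.
move=> x; rewrite inE => xb; move: (all_iota9P bdom x); rewrite xb.
by move=> /has_iota9P [a /andP [ab eax]]; exists a; rewrite ?inE ?eE.
Qed.

Lemma not_equistable_certificate (bpos bneg : seq (seq nat)) (bS : seq nat) :
  all block_maximal bpos -> all block_maximal bneg ->
  size bpos = (size bneg).+1 -> count_identity bpos bneg bS ->
  ~~ block_stable bS -> ~ equistable e.
Proof.
move=> maxpos maxneg sizepos countS unstable equi.
have maxmap bs : all block_maximal bs -> all (maximal_stable e) (map cir9_set bs).
  by rewrite all_map => /sub_all; apply=> b /maximal_stable_cir9_set.
have /maxsetp : maximal_stable e (cir9_set bS).
  apply: (equistable_count_closed equi (maxmap _ maxpos) (maxmap _ maxneg)).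
    by rewrite !size_map.
  by move=> v; rewrite !count_cir9_set inE; apply/eqP/(all_iota9P countS).
by rewrite stable_cir9_setP (negbTE unstable).
Qed.

End NatGraph.

Definition cir9n (m n : nat) : bool :=
  (m != n) && ~~ has (fun b => (m \in b) && (n \in b)) cir9_blocks.

Lemma cir9E (x y : 'I_9) : cir9 x y = cir9n x y. Proof. by []. Qed.

Definition cir9c (m n : nat) : bool := (m != n) && ~~ cir9n m n.

Lemma complement_cir9E (x y : 'I_9) : complement_graph cir9 x y = cir9c x y.
Proof. by []. Qed.

Definition stable_indicator (f : nat -> bool) : bool :=
  all (fun x => all (fun y => f x ==> f y ==> ~~ cir9n x y) (iota 0 9))
      (iota 0 9).

Definition indicator_in_block (f : nat -> bool) : bool :=
  has (fun b => all (fun x => f x ==> (x \in b)) (iota 0 9)) cir9_blocks.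

Lemma stable_indicator_in_block (f : nat -> bool) :
  stable_indicator f -> indicator_in_block f.
Proof.
pose g := nth false [:: f 0; f 1; f 2; f 3; f 4; f 5; f 6; f 7; f 8]%N.
have [-> ->] : stable_indicator f = stable_indicator g
               /\ indicator_in_block f = indicator_in_block g by [].
rewrite /g; case: (f 0%N); case: (f 1%N); case: (f 2%N); case: (f 3%N);
  case: (f 4%N); case: (f 5%N); case: (f 6%N); case: (f 7%N); by case: (f 8%N).
Qed.

Lemma stable_sub_cir9_block (S : {set 'I_9}) :
  stable cir9 S -> exists2 b, b \in cir9_blocks & S \subset cir9_set b.
Proof.
move=> stS; pose f n := (n < 9) && (inord n \in S).
have /stable_indicator_in_block /hasP [b bB fb] : stable_indicator f.
  apply/allP => x _; apply/allP => y _; rewrite /f.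
  apply/implyP => /andP [x9 xS]; apply/implyP => /andP [y9 yS].
  move/forallP: stS => /(_ (inord x)); rewrite xS => /forallP /(_ (inord y)).
  by rewrite yS cir9E !inordK.
exists b => //; apply/subsetP => s sS; rewrite inE.
by move: (all_iota9P fb s); rewrite /f ltn_ord inord_val sS.
Qed.

Lemma maximal_stable_cir9 (S : {set 'I_9}) :
  maximal_stable cir9 S -> exists2 b, b \in cir9_blocks & S = cir9_set b.
Proof.
move=> maxS; have [b bB sSb] := stable_sub_cir9_block (maxsetp maxS).
exists b => //; apply/esym; move/maxsetP: maxS => [_]; apply=> //.
rewrite (stable_cir9_setP cir9E).
by apply: (allP (isT : all (block_stable cir9n) cir9_blocks)).
Qed.

Definition block_triangle (b : seq nat) : bool :=
  all (fun u => all (fun v =>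
    cir9n u v ==> (u \notin b) ==> (v \notin b) ==>
    has (fun s => [&& s \in b, cir9n s u & cir9n s v]) (iota 0 9))
  (iota 0 9)) (iota 0 9).

Lemma triangle_cir9 : triangle_graph cir9.
Proof.
move=> S /maximal_stable_cir9 [b bB ->] u v euv; rewrite !inE => ub vb.
have := allP (isT : all block_triangle cir9_blocks) b bB.
move=> /all_iota9P /(_ u) /all_iota9P /(_ v); rewrite -cir9E euv ub vb.
by move=> /has_iota9P [s /and3P [sb esu esv]]; exists s; rewrite ?inE.
Qed.

Lemma not_equistable_cir9 : ~ equistable cir9.
Proof.
apply: (@not_equistable_certificate cir9n _ cir9E
          [:: [:: 0; 1; 2]; [:: 3; 4; 5]; [:: 6; 7; 8]]%N
          [:: [:: 0; 3; 6]; [:: 2; 5; 8]]%N [:: 1; 4; 7]%N).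
all: by [].
Qed.

Lemma not_equistable_complement_cir9 : ~ equistable (complement_graph cir9).
Proof.
apply: (@not_equistable_certificate cir9c _ complement_cir9E
          [:: [:: 0; 4; 7]; [:: 1; 3; 7]]%N [:: [:: 1; 4; 7]]%N [:: 0; 3; 7]%N).
all: by [].
Qed.

Theorem proposition41 : triangle_graph cir9 /\ ~ cup_equistable cir9.
Proof.
split; first exact: triangle_cir9.
by case; [exact: not_equistable_cir9 | exact: not_equistable_complement_cir9].
Qed.
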